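(* Let $X$ be a bounded degree simplicial complex, and let $X^{\leq 1}$ denote its $1$-skeleton (a bounded degree graph). Then ${}_s\mathrm{TO}^1_X(r)\simeq \mathrm{cw}_{X^{\leq 1}}(r)$.
   Context: A simplicial complex is the topological realisation of an abstract simplicial complex $(S,\mathcal S)$ ($\mathcal S$ a family of finite subsets of $S$ containing singletons, closed under subsets); it is bounded degree if $S$ is countable and $\max_s|\{t\ne s:\{s,t\}\in\mathcal S\}|<\infty$. $|Z|$ is the number of $0$-simplices; closed simplices are sets of points whose support lies in a fixed element of $\mathcal S$; $Z\le X$ means an injection of $0$-simplices sending simplices to simplices (for graphs: $Z$ is isomorphic to a subgraph). For finite $Z$ and continuous $f:Z\to\mathbb R^q$, ${}_s\mathrm{Ov}(f)=\max_{z}|\{\sigma\text{ closed simplex of }Z: z\in f(\sigma)\}|$, ${}_s\mathrm{TO}^q(Z)=\min_f {}_s\mathrm{Ov}(f)$, ${}_s\mathrm{TO}^q_X(r)=\max\{{}_s\mathrm{TO}^q(Z): Z\le X, |Z|\le r\}$. For a finite graph $\Gamma$ with $r$ vertices, the cutwidth $\mathrm{cw}(\Gamma)$ is the minimum over bijections $\sigma:V\Gamma\to\{1,\dots,r\}$ of $\max_i|\{vw\in E\Gamma:\sigma(v)<i\le\sigma(w)\}|$. For a graph $X$, $\mathrm{cw}_X(r)=\max\{\mathrm{cw}(\Gamma):\Gamma\le X, |\Gamma|\le r\}$. $f\lesssim g$ means there is $C$ with $f(r)\le Cg(Cr)+C$ for all $r$; $f\simeq g$ means both directions hold. *)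

From HB Require Import structures.
From mathcomp Require Import all_boot all_order all_algebra.
From mathcomp Require Import fingroup perm.
From mathcomp Require Import finmap.
From mathcomp Require Import boolp classical_sets topology normedtype.
From mathcomp Require Import Rstruct Rstruct_topology.
From Stdlib Require Import Reals ClassicalEpsilon.

Set Implicit Arguments.
Unset Strict Implicit.
Unset Printing Implicit Defensive.

Import Order.TTheory GRing.Theory Num.Theory.
Local Open Scope fset_scope.

(** Generic maximum / minimum of a set of natural numbers (Prop predicate).
    [nat_max P] is the largest element of P (if it exists, else 0),
    [nat_min P] is the least element of P (if it exists, else 0). *)
Definition nat_max (P : nat -> Prop) : nat :=
  epsilon (inhabits 0%N) (fun n => P n /\ forall m, P m -> (m <= n)%N).
Definition nat_min (P : nat -> Prop) : nat :=
  epsilon (inhabits 0%N) (fun n => P n /\ forall m, P m -> (n <= m)%N).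

Definition asymp_le (f g : nat -> nat) : Prop :=
  exists C : nat, forall r : nat, (f r <= C * g (C * r) + C)%N.
Definition asymp_eq (f g : nat -> nat) : Prop := asymp_le f g /\ asymp_le g f.

Definition is_complex (S : countType) (Xs : {fset S} -> Prop) : Prop :=
  (forall s : S, Xs [fset s]) /\
  (forall A B : {fset S}, Xs A -> B `<=` A -> Xs B).

Definition bounded_degree (S : countType) (Xs : {fset S} -> Prop) : Prop :=
  exists D : nat, forall (s : S) (A : {fset S}),
    (forall t, t \in A -> t != s /\ Xs [fset s; t]) -> (#|` A| <= D)%N.

Definition fin_complex (n : nat) (F : {set {set 'I_n}}) : Prop :=
  (forall i : 'I_n, [set i] \in F) /\
  (forall A B : {set 'I_n}, A \in F -> B \subset A -> B \in F).

Definition complex_embeds (n : nat) (F : {set {set 'I_n}})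
    (S : countType) (Xs : {fset S} -> Prop) : Prop :=
  exists phi : 'I_n -> S, injective phi /\
    forall sigma, sigma \in F -> Xs [fset phi i | i in enum sigma].

Local Open Scope ring_scope.

Definition supp (n : nat) (x : 'rV[R]_n) : {set 'I_n} := [set i | x ord0 i != 0].

Definition realisation (n : nat) (F : {set {set 'I_n}}) : set 'rV[R]_n :=
  fun x => (forall i, 0 <= x ord0 i) /\ \sum_(i < n) x ord0 i = 1 /\ supp x \in F.

Definition closed_simplex (n : nat) (F : {set {set 'I_n}}) (sigma : {set 'I_n})
  : set 'rV[R]_n :=
  fun x => realisation F x /\ supp x \subset sigma.

Definition overlap_at (n : nat) (F : {set {set 'I_n}}) (f : 'rV[R]_n -> R)
    (z : R) : nat :=
  #|[set sigma in F | (0 < #|sigma|)%nat &&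
        `[< exists x, closed_simplex F sigma x /\ f x = z >]]|.

Definition sOv (n : nat) (F : {set {set 'I_n}}) (f : 'rV[R]_n -> R) : nat :=
  nat_max (fun k => exists z : R, k = overlap_at F f z).

Definition sTO1 (n : nat) (F : {set {set 'I_n}}) : nat :=
  nat_min (fun k => exists f : 'rV[R]_n -> R,
    continuous (from_subspace (realisation F) f) /\ k = sOv F f).

Definition sTO1_X (S : countType) (Xs : {fset S} -> Prop) (r : nat) : nat :=
  nat_max (fun k => exists (n : nat) (F : {set {set 'I_n}}),
    (n <= r)%nat /\ fin_complex F /\ complex_embeds F Xs /\ k = sTO1 F).

Definition simple_graph (m : nat) (e : rel 'I_m) : Prop :=
  symmetric e /\ irreflexive e.

Definition graph_embeds_skel (m : nat) (e : rel 'I_m)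
    (S : countType) (Xs : {fset S} -> Prop) : Prop :=
  exists psi : 'I_m -> S, injective psi /\
    forall i j, e i j -> Xs [fset psi i; psi j].

(** number of edges vw with sigma(v) < i <= sigma(w), for the bijection
    sigma = p + 1 : 'I_m -> {1..m} and i = j + 1 *)
Definition cut_size (m : nat) (e : rel 'I_m) (p : {perm 'I_m}) (j : 'I_m) : nat :=
  #|[set vw : 'I_m * 'I_m | e vw.1 vw.2 && ((p vw.1 < j)%nat && (j <= p vw.2)%nat)]|.

Definition cutwidth (m : nat) (e : rel 'I_m) : nat :=
  nat_min (fun k => exists p : {perm 'I_m}, k = \max_(j < m) cut_size e p j).

Definition cw_X (S : countType) (Xs : {fset S} -> Prop) (r : nat) : nat :=
  nat_max (fun k => exists (m : nat) (e : rel 'I_m),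
    (m <= r)%nat /\ simple_graph e /\ graph_embeds_skel e Xs /\ k = cutwidth e).

(** Lower bound: realise a graph [e] embedded in the 1-skeleton as a
    1-dimensional complex. Given any continuous [f], order the vertices by
    their [f]-values. An edge cut at the position of a vertex [u] runs from
    a vertex with value at most [f u] to one with value at least [f u], so by
    the intermediate value theorem its image contains [f u]: the overlap is
    at least the cutwidth.

    Upper bound: given a complex [Z] embedded in [X] and an optimal linear
    order [p] of its 1-skeleton, send [Z] affinely to the line, vertex [u]
    going to [p u]. A simplex whose image contains [z] either has a vertex
    at height [z], or has vertices strictly below and above [z], hence
    contains an edge cut at height [z]. So it lies in the star of one of at
    most [cw + 1] vertices, and bounded degree [D] bounds every star by
    [2 ^ (D + 1)]. *)

From Stdlib Require Import Rdefinitions ClassicalEpsilon.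
From mathcomp Require Import boolp classical_sets topology normedtype.
From mathcomp Require Import Rstruct Rstruct_topology.
From mathcomp Require Import all_boot all_order all_algebra finmap.
From mathcomp Require Import fingroup perm.

Set Implicit Arguments.
Unset Strict Implicit.
Unset Printing Implicit Defensive.

Import Order.TTheory GRing.Theory Num.Theory.

Lemma nat_maxP (P : nat -> Prop) n B :
  P n -> (forall m, P m -> m <= B) ->
  P (nat_max P) /\ forall m, P m -> m <= nat_max P.
Proof.
move=> Pn P_le_B.
suff ex : exists k, P k /\ forall m, P m -> m <= k by exact: epsilon_spec ex.
have exP : exists k, `[< P k >] by exists n; apply/asboolP.
have [k /asboolP Pk k_max] := ex_maxnP exP (fun m Pm => P_le_B m (asboolW Pm)).
by exists k; split=> // m /asboolP; apply: k_max.
Qed.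

Lemma nat_minP (P : nat -> Prop) n :
  P n -> P (nat_min P) /\ forall m, P m -> nat_min P <= m.
Proof.
move=> Pn.
suff ex : exists k, P k /\ forall m, P m -> k <= m by exact: epsilon_spec ex.
have exP : exists k, `[< P k >] by exists n; apply/asboolP.
have [k /asboolP Pk k_min] := ex_minnP exP.
by exists k; split=> // m /asboolP; apply: k_min.
Qed.

Lemma card_bigcup_le_mul (I T : finType) (A : {set I}) (G : I -> {set T}) K :
  (forall i, i \in A -> #|G i| <= K) -> #|\bigcup_(i in A) G i| <= #|A| * K.
Proof.
move=> G_le; rewrite -sum_nat_const.
apply: (big_rec2 (fun (U : {set T}) k => #|U| <= k)) => [|i U k iA U_le].
  by rewrite cards0.
by apply: leq_trans (leq_card_setU _ _) _; rewrite leq_add ?G_le.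
Qed.

Lemma continuous_comp_within {T U V : topologicalType} (A : set T) (B : set U)
    (g : T -> U) (f : U -> V) :
  continuous g -> (forall t, A t -> B (g t)) ->
  continuous (from_subspace B f) -> continuous (from_subspace A (f \o g)).
Proof.
move=> cg gAB /subspace_continuousP cf; apply/subspace_continuousP => x Ax.
apply: (@cvg_comp _ _ _ g f _ (within B (nbhs (g x)))).
  move=> W; rewrite /within /= => /(cg x); rewrite /= /nbhs /= => gW.
  by apply: filterS gW => t Wt At; apply: Wt (gAB t At).
exact: cf _ (gAB x Ax).
Qed.

Lemma exists_sorting_perm (d : Order.disp_t) (T : orderType d) m
    (a : 'I_m -> T) :
  exists p : {perm 'I_m}, forall u v, p u < p v -> (a u <= a v)%O.
Proof.
pose le_a u v := (a u <= a v)%O.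
have le_a_trans : transitive le_a by move=> ? ? ?; apply: le_trans.
pose s := sort le_a (enum 'I_m).
have s_sorted : sorted le_a s by apply/sort_sorted => u v; apply: le_total.
have mem_s u : u \in s by rewrite mem_sort mem_enum.
have size_s : size s = m by rewrite size_sort size_enum_ord.
have index_lt u : index u s < m by rewrite -[X in _ < X]size_s index_mem.
have rank_inj : injective (fun u => Ordinal (index_lt u)).
  by move=> u v /(congr1 val) /= /index_inj; apply.
exists (perm rank_inj) => u v; rewrite !permE /=.
exact: (sorted_ltn_index le_a_trans s_sorted).
Qed.

Section ConvexCombination.
Local Open Scope ring_scope.
Variables (K : realDomainType) (m : nat) (c : 'I_m -> K).
Hypotheses (c_ge0 : forall i, 0 <= c i) (c_sum1 : \sum_i c i = 1).

Lemma exists_le_convex_comb (g : 'I_m -> K) :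
  exists2 v, c v != 0 & g v <= \sum_i c i * g i.
Proof.
have /existsP[i0 ci0] : [exists i, c i != 0].
  apply: contra_eqT c_sum1 => /existsPn c0.
  by rewrite big1 1?eq_sym ?oner_eq0 // => i _; apply/eqP/negPn/c0.
case: (@arg_minP _ _ _ i0 [pred i | c i != 0] g ci0) => v cv v_min.
exists v => //; rewrite -[g v]mul1r -c_sum1 mulr_suml; apply: ler_sum => i _.
have [->|ci] := eqVneq (c i) 0; first by rewrite !mul0r.
by rewrite ler_wpM2l ?v_min.
Qed.

Lemma exists_ge_convex_comb (g : 'I_m -> K) :
  exists2 v, c v != 0 & \sum_i c i * g i <= g v.
Proof.
have [v cv le_v] := exists_le_convex_comb (fun i => - g i).
exists v => //; rewrite -lerN2 -sumrN.
by under eq_bigr do rewrite -mulrN.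
Qed.

End ConvexCombination.

Section Extremal.
Variables (n : nat) (F : {set {set 'I_n}}).

Lemma overlap_at_le_card f z : overlap_at F f z <= #|F|.
Proof. by apply/subset_leq_card/subsetP => s; rewrite inE => /andP[]. Qed.

Lemma sOv_spec f :
  (exists z, sOv F f = overlap_at F f z) /\
  forall z, overlap_at F f z <= sOv F f.
Proof.
have [||attained maximal] :=
  @nat_maxP (fun k => exists z, k = overlap_at F f z) (overlap_at F f R0) #|F|.
- by exists R0.
- by move=> _ [z ->]; apply: overlap_at_le_card.
by split=> // z; apply: maximal; exists z.
Qed.

Lemma sTO1_spec :
  (exists2 f, continuous (from_subspace (realisation F) f)
            & sTO1 F = sOv F f) /\
  forall f, continuous (from_subspace (realisation F) f) -> sTO1 F <= sOv F f.
Proof.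
have [|[f [cf E]] minimal] := @nat_minP (fun k => exists f : 'rV[R]_n -> R,
    continuous (from_subspace (realisation F) f) /\ k = sOv F f)
  (sOv F (fun=> R0)).
  by exists (fun=> R0); split=> //; apply: cst_continuous.
split=> [|g cg]; first by exists f.
by apply: minimal; exists g.
Qed.

Lemma sTO1_le_exp : sTO1 F <= 2 ^ n.
Proof.
have [[f _ ->] _] := sTO1_spec; have [[z ->] _] := sOv_spec f.
apply: leq_trans (overlap_at_le_card f z) (leq_trans (max_card _) _).
by rewrite -cardsT -powersetT card_powerset cardsT card_ord.
Qed.

End Extremal.

Section Cutwidth.
Variables (m : nat) (e : rel 'I_m).

Definition cut_set (p : {perm 'I_m}) (j : nat) : {set 'I_m * 'I_m} :=
  [set vw | e vw.1 vw.2 && (p vw.1 < j <= p vw.2)].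

Lemma cut_sizeE p (j : 'I_m) : cut_size e p j = #|cut_set p j|.
Proof. by []. Qed.

Lemma card_cut_set_le p j : #|cut_set p j| <= \max_(i < m) cut_size e p i.
Proof.
have [jm | mj] := ltnP j m.
  by rewrite -[j]/(nat_of_ord (Ordinal jm)) -cut_sizeE leq_bigmax.
suff -> : cut_set p j = set0 by rewrite cards0.
apply/setP => vw; rewrite !inE; apply/negbTE/negP => /and3P[_ _ jw].
by have := leq_trans mj jw; rewrite leqNgt ltn_ord.
Qed.

Lemma cutwidth_spec :
  (exists p, cutwidth e = \max_(j < m) cut_size e p j) /\
  forall p, cutwidth e <= \max_(j < m) cut_size e p j.
Proof.
have [[p E] minimal] := @nat_minP
  (fun k => exists p : {perm 'I_m}, k = \max_(j < m) cut_size e p j)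
  (\max_(j < m) cut_size e 1%g j) (ex_intro _ 1%g erefl).
split=> [|q]; first by exists p.
by apply: minimal; exists q.
Qed.

Lemma cutwidth_le_sq : cutwidth e <= m * m.
Proof.
apply: leq_trans (cutwidth_spec.2 1%g) _; apply/bigmax_leqP => j _.
by apply: leq_trans (max_card _) _; rewrite card_prod card_ord.
Qed.

End Cutwidth.

Section Embedded.
Variables (S : countType) (Xs : {fset S} -> Prop).

Lemma sTO1_X_spec r :
  (forall B, (forall n (F : {set {set 'I_n}}), n <= r -> fin_complex F ->
      complex_embeds F Xs -> sTO1 F <= B) -> sTO1_X Xs r <= B) /\
  forall n (F : {set {set 'I_n}}), n <= r -> fin_complex F ->
    complex_embeds F Xs -> sTO1 F <= sTO1_X Xs r.
Proof.
rewrite /sTO1_X.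
have [||[n [F [nr [cF [eF ->]]]]] maximal] :=
  @nat_maxP (fun k => exists n (F : {set {set 'I_n}}),
    n <= r /\ fin_complex F /\ complex_embeds F Xs /\ k = sTO1 F)
  (sTO1 (set0 : {set {set 'I_0}})) (2 ^ r).
- exists 0, set0; split=> //; split; last split=> //.
    by split=> [[i]|A B]; rewrite ?ltn0 ?inE.
  by exists (ffun0 (card_ord 0)); split=> [[i]|s]; rewrite ?ltn0 ?inE.
- move=> _ [n [F [nr [_ [_ ->]]]]].
  by apply: leq_trans (sTO1_le_exp F) _; rewrite leq_pexp2l.
split=> [B ub | n' F' n'r cF' eF']; first exact: ub.
by apply: maximal; exists n', F'.
Qed.

Lemma cw_X_spec r :
  (exists m (e : rel 'I_m), [/\ m <= r, simple_graph e,
     graph_embeds_skel e Xs & cw_X Xs r = cutwidth e]) /\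
  forall m (e : rel 'I_m), m <= r -> simple_graph e ->
    graph_embeds_skel e Xs -> cutwidth e <= cw_X Xs r.
Proof.
rewrite /cw_X.
have [||[m [e [mr [se [ee E]]]]] maximal] :=
  @nat_maxP (fun k => exists m (e : rel 'I_m),
    m <= r /\ simple_graph e /\ graph_embeds_skel e Xs /\ k = cutwidth e)
  (cutwidth (fun _ _ : 'I_0 => false)) (r * r).
- exists 0, (fun _ _ => false); do !split=> //.
  by exists (ffun0 (card_ord 0)); split=> [[i]|]; rewrite ?ltn0.
- move=> _ [m [e [mr [_ [_ ->]]]]].
  by apply: leq_trans (cutwidth_le_sq e) _; rewrite leq_mul.
split=> [|m' e' m'r se' ee']; first by exists m, e.
by apply: maximal; exists m', e'.
Qed.

Lemma cw_X_nondecreasing : {homo cw_X Xs : r r' / r <= r'}.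
Proof.
move=> r r' le_rr'; have [[m [e [mr se ee ->]]] _] := cw_X_spec r.
exact: (cw_X_spec r').2 _ _ (leq_trans mr le_rr') se ee.
Qed.

Hypothesis complexXs : is_complex Xs.

Lemma is_complex_imfset (T : finType) (phi : T -> S) (sigma : {set T}) A :
  Xs A -> (forall i, i \in sigma -> phi i \in A) ->
  Xs [fset phi i | i in enum sigma]%fset.
Proof.
move=> XA phi_A; apply: complexXs.2 XA _.
by apply/fsubsetP => x /imfsetP[i /= + ->]; rewrite mem_enum; apply: phi_A.
Qed.

Lemma embedded_edge n (F : {set {set 'I_n}}) (phi : 'I_n -> S) u t :
  (forall sigma, sigma \in F -> Xs [fset phi i | i in enum sigma]%fset) ->
  [set u; t] \in F -> Xs [fset phi u; phi t]%fset.
Proof.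
move=> phi_F Fut; apply: complexXs.2 (phi_F _ Fut) _.
by apply/fsubsetP => x /fset2P[]->; apply/imfsetP;
  [exists u | exists t]; rewrite //= mem_enum ?set21 ?set22.
Qed.

End Embedded.

Section EdgePaths.
Local Open Scope ring_scope.
Variables (n : nat) (F : {set {set 'I_n}}).
Hypothesis complexF : fin_complex F.

Definition edge_path (v w : 'I_n) (t : R) : 'rV[R]_n :=
  delta_mx ord0 v + t *: (delta_mx ord0 w - delta_mx ord0 v).

Lemma edge_path_coord v w t k :
  edge_path v w t ord0 k = (1 - t) * (k == v)%:R + t * (k == w)%:R.
Proof. by rewrite !mxE !eqxx /= mulrBl mulrBr mul1r addrA addrAC. Qed.

Lemma edge_path0 v w : edge_path v w 0 = delta_mx ord0 v.
Proof. by rewrite /edge_path scale0r addr0. Qed.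

Lemma edge_path1 v w : edge_path v w 1 = delta_mx ord0 w.
Proof. by rewrite /edge_path scale1r addrC subrK. Qed.

Lemma edge_path_continuous v w : continuous (edge_path v w).
Proof.
move=> t; apply: cvgD; first exact: cvg_cst.
by apply: cvgZr_tmp; exact: cvg_id.
Qed.

Lemma edge_path_closed_simplex v w t : [set v; w] \in F -> 0 <= t <= 1 ->
  closed_simplex F [set v; w] (edge_path v w t).
Proof.
move=> Fvw /andP[t_ge0 t_le1].
have supp_sub : supp (edge_path v w t) \subset [set v; w].
  apply/subsetP => k; rewrite !inE edge_path_coord.
  by case: (k == v); case: (k == w); rewrite ?mulr0 ?addr0 ?eqxx.
have sum_indicator u : \sum_(k < n) ((k == u)%:R : R) = 1.
  by rewrite (bigD1 u) //= eqxx big1 ?addr0 // => k /negbTE->.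
split=> //; split; [|split].
- move=> k; rewrite edge_path_coord.
  by rewrite addr_ge0 // mulr_ge0 ?subr_ge0.
- under eq_bigr do rewrite edge_path_coord.
  by rewrite big_split /= -!mulr_sumr !sum_indicator !mulr1 subrK.
- exact: complexF.2 Fvw supp_sub.
Qed.

Lemma edge_path_attains (f : 'rV[R]_n -> R) v w z :
  continuous (from_subspace (realisation F) f) -> [set v; w] \in F ->
  f (delta_mx ord0 v) <= z <= f (delta_mx ord0 w) ->
  exists x, closed_simplex F [set v; w] x /\ f x = z.
Proof.
move=> cf Fvw /andP[fv_z z_fw].
have cfe : continuous (from_subspace `[0, 1]%classic (f \o edge_path v w)).
  apply: continuous_comp_within cf; first exact: edge_path_continuous.
  move=> t /=; rewrite in_itv /= => t01.
  by case: (edge_path_closed_simplex Fvw t01).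
have [|t] := IVT ler01 cfe (v := z).
  by rewrite /= edge_path0 edge_path1 ge_min fv_z le_max z_fw orbT.
rewrite in_itv /= => t01 <-; exists (edge_path v w t).
by split=> //; apply: edge_path_closed_simplex.
Qed.

Lemma cut_size_le_overlap_at (e : rel 'I_n) (f : 'rV[R]_n -> R)
    (p : {perm 'I_n}) j :
  continuous (from_subspace (realisation F) f) ->
  (forall v w, e v w -> [set v; w] \in F) ->
  (forall u v, (p u < p v)%N -> f (delta_mx ord0 u) <= f (delta_mx ord0 v)) ->
  (cut_size e p j <= overlap_at F f (f (delta_mx ord0 ((p^-1)%g j))))%N.
Proof.
move=> cf e_F f_sorted; set u := (p^-1)%g j.
have pu : p u = j by rewrite permKV.
have endpoints_inj :
    {in cut_set e p j &, injective (fun vw => [set vw.1; vw.2])}.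
  move=> [v w] [v' w']; rewrite !inE /=.
  move=> /and3P[_ vj jw] /and3P[_ vj' jw'] E.
  have wv' : w != v' by apply: contraTneq jw => ->; rewrite -ltnNge.
  have vw' : v != w' by apply: contraTneq vj => ->; rewrite -leqNgt.
  have := set21 v w; have := set22 v w.
  by rewrite E !inE (negbTE wv') (negbTE vw') orbF => /eqP-> /eqP->.
rewrite cut_sizeE -(card_in_imset endpoints_inj).
apply/subset_leq_card/subsetP => _ /imsetP[[v w] + ->]; rewrite inE /=.
move=> /and3P[evw vj jw]; rewrite inE e_F //=.
apply/andP; split; first by apply/card_gt0P; exists v; rewrite set21.
apply/asboolP; apply: edge_path_attains; rewrite ?e_F //.
apply/andP; split; first by apply: f_sorted; rewrite pu.
have [->//|wu] := eqVneq w u.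
apply: f_sorted; rewrite pu ltn_neqAle jw andbT.
by apply: contraNneq wu => /ord_inj jE; rewrite /u jE permK.
Qed.

End EdgePaths.

Section LowerBound.
Variables (m : nat) (e : rel 'I_m).

Definition graph_complex : {set {set 'I_m}} :=
  [set s : {set 'I_m} |
    (#|s| <= 1) || [exists i, exists j, e i j && (s == [set i; j])]].

Lemma graph_complex_fin_complex : fin_complex graph_complex.
Proof.
split=> [i | A B]; first by rewrite inE cards1.
rewrite !inE => /orP[A_le1 | /existsP[i /existsP[j /andP[eij /eqP A_ij]]]] BA.
  by rewrite (leq_trans (subset_leq_card BA) A_le1).
have [//|B_gt1] := leqP #|B| 1.
apply/existsP; exists i; apply/existsP; exists j.
rewrite eij -A_ij eqEcard BA A_ij cards2 /=.
by rewrite (leq_trans _ B_gt1) // ltnS leq_b1.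
Qed.

Lemma graph_complex_edge v w : e v w -> [set v; w] \in graph_complex.
Proof.
move=> evw; rewrite inE; apply/orP; right.
by apply/existsP; exists v; apply/existsP; exists w; rewrite evw eqxx.
Qed.

Lemma graph_complex_embeds (S : countType) (Xs : {fset S} -> Prop) :
  is_complex Xs -> 0 < m -> graph_embeds_skel e Xs ->
  complex_embeds graph_complex Xs.
Proof.
move=> complexXs m_gt0 [psi [psi_inj psi_e]]; exists psi; split=> // sigma.
rewrite inE => /orP[sigma_le1 | /existsP[i /existsP[j /andP[eij /eqP ->]]]].
  have [i sigma_i] : exists i, sigma \subset [set i].
    have [->|[i sigma_i]] := set_0Vmem sigma.
      by exists (Ordinal m_gt0); rewrite sub0set.
    exists i; apply/subsetP => k sigma_k.
    by rewrite inE (card_le1_eqP sigma_le1 k i).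
  apply: (is_complex_imfset complexXs (complexXs.1 (psi i))) => k.
  by move=> /(subsetP sigma_i)/set1P->; rewrite fset11.
apply: (is_complex_imfset complexXs (psi_e _ _ eij)) => k.
by case/set2P=> ->; rewrite ?fset21 ?fset22.
Qed.

Lemma cutwidth_le_sOv_graph_complex (f : 'rV[R]_m -> R) :
  continuous (from_subspace (realisation graph_complex) f) ->
  cutwidth e <= sOv graph_complex f.
Proof.
move=> cf.
have [p f_sorted] := exists_sorting_perm (fun i => f (delta_mx ord0 i)).
apply: leq_trans ((cutwidth_spec e).2 p) _; apply/bigmax_leqP => j _.
apply: leq_trans (cut_size_le_overlap_at graph_complex_fin_complex j cf
  (@graph_complex_edge) f_sorted) _.
exact: (sOv_spec _ f).2.
Qed.

End LowerBound.

Lemma cw_X_le_sTO1_X (S : countType) (Xs : {fset S} -> Prop) r :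
  is_complex Xs -> cw_X Xs r <= sTO1_X Xs r.
Proof.
move=> complexXs; have [[m [e [mr _ embe ->]]] _] := cw_X_spec Xs r.
have [m0 | m_gt0] := posnP m.
  by subst m; apply: leq_trans ((cutwidth_spec e).2 1%g) _; rewrite big_ord0.
apply: leq_trans ((sTO1_X_spec Xs r).2 _ _ mr (graph_complex_fin_complex e)
  (graph_complex_embeds complexXs m_gt0 embe)).
have [[f cf ->] _] := sTO1_spec (graph_complex e).
exact: cutwidth_le_sOv_graph_complex.
Qed.

Section UpperBound.
Local Open Scope ring_scope.
Variables (n : nat) (F : {set {set 'I_n}}).
Hypothesis complexF : fin_complex F.

Definition skeleton : rel 'I_n := fun i j => (i != j) && ([set i; j] \in F).

Definition star (u : 'I_n) : {set {set 'I_n}} := [set s in F | u \in s].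

Definition closed_nbhd (u : 'I_n) : {set 'I_n} :=
  [set t | (t == u) || ([set u; t] \in F)].

Definition height (p : {perm 'I_n}) (x : 'rV[R]_n) : R :=
  \sum_(i < n) x ord0 i * (p i)%:R.

Lemma skeleton_simple : simple_graph skeleton.
Proof.
split=> [i j | i]; last by rewrite /skeleton eqxx.
by rewrite /skeleton eq_sym setUC.
Qed.

Lemma card_star_le u : (#|star u| <= 2 ^ #|closed_nbhd u|)%N.
Proof.
rewrite -card_powerset; apply/subset_leq_card/subsetP => s.
rewrite inE powersetE => /andP[Fs us]; apply/subsetP => t ts.
rewrite inE; case: eqP => //= _; apply: complexF.2 Fs _.
by apply/subsetP => k; rewrite !inE => /orP[]/eqP->.
Qed.

Lemma height_continuous (p : {perm 'I_n}) : continuous (height p).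
Proof.
apply: continuous_big => [|i _ x].
  exact: (@pseudometric_normed_Zmodule.add_continuous _ R^o).
exact: cvgMr_tmp (@coord_continuous _ 1 n ord0 i x).
Qed.

(* Cutting at position [truncn h + 1] separates the vertices of height at
   most [h] from those above it. *)
Lemma closed_simplex_height_cut (p : {perm 'I_n}) sigma x :
  sigma \in F -> closed_simplex F sigma x ->
  (exists2 u, u \in sigma & (p u)%:R = height p x) \/
  exists2 vw, vw \in cut_set skeleton p (Num.truncn (height p x)).+1
            & vw.1 \in sigma.
Proof.
move=> Fsigma [[x_ge0 [x_sum1 _]] supp_sub].
have in_sigma i : x ord0 i != 0 -> i \in sigma.
  by move=> xi; apply: (subsetP supp_sub); rewrite inE.
set h := height p x.
have [v /in_sigma v_sigma pv_le] :=
  exists_le_convex_comb x_ge0 x_sum1 (fun i => (p i)%:R).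
have [w /in_sigma w_sigma pw_ge] :=
  exists_ge_convex_comb x_ge0 x_sum1 (fun i => (p i)%:R).
have [pv_h | pv_h] := eqVneq ((p v)%:R) h; first by left; exists v.
have [pw_h | pw_h] := eqVneq ((p w)%:R) h; first by left; exists w.
have lt_v : (p v)%:R < h by rewrite lt_neqAle pv_h.
have lt_w : h < (p w)%:R by rewrite lt_neqAle eq_sym pw_h.
have h_ge0 : 0 <= h by apply: le_trans (ltW lt_v).
right; exists (v, w) => //; rewrite inE /= /skeleton.
apply/andP; split; apply/andP; split.
- by apply: contraTneq (lt_trans lt_v lt_w) => ->; rewrite ltxx.
- apply: complexF.2 Fsigma _.
  by apply/subsetP => k; rewrite !inE => /orP[]/eqP->.
- by rewrite ltnS truncn_ge_nat // ltW.
- by rewrite truncn_lt_nat.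
Qed.

Lemma overlap_at_height_le (p : {perm 'I_n}) K z :
  (forall u, #|star u| <= K)%N ->
  (overlap_at F (height p) z <= (\max_(j < n) cut_size skeleton p j).+1 * K)%N.
Proof.
move=> star_le; set cw := \max_(j < n) cut_size skeleton p j.
set level := [set u | (p u)%:R == z].
set crossing := [set vw.1 | vw in cut_set skeleton p (Num.truncn z).+1].
have card_level : (#|level| <= 1)%N.
  apply/card_le1_eqP => u u'; rewrite !inE => /eqP pu /eqP pu'.
  by apply/(@perm_inj _ p)/ord_inj/eqP; rewrite -(eqr_nat R) pu pu'.
have card_crossing : (#|crossing| <= cw)%N.
  exact: leq_trans (leq_imset_card _ _) (card_cut_set_le _ _ _).
have cover : [set sigma in F | (0 < #|sigma|)%N &&
    `[< exists x, closed_simplex F sigma x /\ height p x = z >]]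
    \subset \bigcup_(u in level :|: crossing) star u.
  apply/subsetP => sigma; rewrite inE => /andP[Fsigma /andP[_ /asboolP]].
  case=> x [x_sigma hx]; apply/bigcupP.
  case: (closed_simplex_height_cut p Fsigma x_sigma); rewrite hx.
    by case=> u u_sigma pu; exists u; rewrite !inE ?pu ?eqxx ?Fsigma.
  case=> vw cut v_sigma; exists vw.1; rewrite !inE ?Fsigma ?v_sigma //.
  by apply/orP; right; apply/imsetP; exists vw.
apply: leq_trans (subset_leq_card cover) _.
apply: leq_trans (card_bigcup_le_mul (fun u _ => star_le u)) _.
by rewrite leq_mul2r (leq_trans (leq_card_setU _ _)) ?orbT // -add1n leq_add.
Qed.

End UpperBound.

Section BoundedDegree.
Variables (S : countType) (Xs : {fset S} -> Prop) (D : nat).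
Hypothesis complexXs : is_complex Xs.
Hypothesis degree_le : forall (s : S) (A : {fset S}),
  (forall t, t \in A -> t != s /\ Xs [fset s; t]%fset) -> #|` A| <= D.

Lemma skeleton_embeds n (F : {set {set 'I_n}}) :
  complex_embeds F Xs -> graph_embeds_skel (skeleton F) Xs.
Proof.
case=> phi [phi_inj phi_F]; exists phi; split=> // i j /andP[_].
exact: (embedded_edge (u := i) (t := j) complexXs phi_F).
Qed.

Lemma card_closed_nbhd_le n (F : {set {set 'I_n}}) u :
  complex_embeds F Xs -> #|closed_nbhd F u| <= D.+1.
Proof.
case=> phi [phi_inj phi_F]; rewrite (cardsD1 u) inE eqxx /= add1n ltnS.
have -> : #|closed_nbhd F u :\ u| =
          #|` [fset phi t | t in enum (closed_nbhd F u :\ u)]%fset|.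
  by rewrite card_imfset //= undup_id ?enum_uniq // cardE.
apply: (degree_le (s := phi u)) => _ /imfsetP[t /= + ->].
rewrite mem_enum !inE => /andP[tu]; rewrite (negbTE tu) /= => Fut.
split; first by rewrite (inj_eq phi_inj).
exact: (embedded_edge (u := u) (t := t) complexXs phi_F Fut).
Qed.

Lemma sTO1_X_le_cw_X r : sTO1_X Xs r <= (cw_X Xs r).+1 * 2 ^ D.+1.
Proof.
apply: (sTO1_X_spec Xs r).1 => n F nr complexF embF.
have [[p cw_p] _] := cutwidth_spec (skeleton F).
have star_le u : #|star F u| <= 2 ^ D.+1.
  apply: leq_trans (card_star_le complexF u) _.
  by rewrite leq_exp2l // card_closed_nbhd_le.
have height_cont : continuous (from_subspace (realisation F) (height p)).
  by apply: continuous_subspaceT; apply: height_continuous.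
apply: leq_trans ((sTO1_spec F).2 _ height_cont) _.
have [[z ->] _] := sOv_spec F (height p).
apply: leq_trans (overlap_at_height_le complexF p z star_le) _.
have cw_le :=
  (cw_X_spec Xs r).2 _ _ nr (skeleton_simple F) (skeleton_embeds embF).
by rewrite leq_mul2r ltnS -cw_p cw_le orbT.
Qed.

End BoundedDegree.

Theorem theorem1p4 (S : countType) (Xs : {fset S} -> Prop) :
  is_complex Xs -> bounded_degree Xs ->
  asymp_eq (sTO1_X Xs) (cw_X Xs).
Proof.
move=> complexXs [D degree_le]; split; last first.
  exists 1 => r; rewrite !mul1n.
  exact: leq_trans (cw_X_le_sTO1_X r complexXs) (leq_addr _ _).
exists (2 ^ D.+1) => r.
apply: leq_trans (sTO1_X_le_cw_X complexXs degree_le r) _.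
rewrite mulSn addnC leq_add2r mulnC leq_mul2l; apply/orP; right.
by apply: cw_X_nondecreasing; rewrite leq_pmull // expn_gt0.
Qed.
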